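(* Fix $\gamma>-1$. Then for every $f\in C^\infty(\mathbb D_E)$ and $(\beta,a)\in\mathbb S^1\times\mathbb R$, $$I_0^H\big(x^{2+2\gamma}\,(f\circ\Phi)\big)(\beta,a)=\mu_H(a)\,\big(I_0^E(d^\gamma f)\big)(\beta,\tan^{-1}a).$$
   Context: $\mathbb D_E=\mathbb D_H=\{|z|\le1\}$; $\Phi\colon\mathbb D_H\to\mathbb D_E$, $\Phi(z)=\frac{2z}{1+|z|^2}$; $x(z)=\frac{1-|z|^2}{1+|z|^2}$; $d(z)=1-|z|^2$; $\mu_H(a)=(1+a^2)^{-1/2}$. Hyperbolic X-ray transform: $I_0^Hh(\beta,a)=\int_{\mathbb R}h(\gamma_{\beta,a}(t))dt$ with $\gamma_{\beta,a}(t)=e^{i\beta}\frac{(2+ia)\tanh(t/2)+ia}{ia\tanh(t/2)-2+ia}$. Euclidean X-ray transform in fan-beam coordinates: $I_0^Eg(\beta,\alpha)=\int_{-\cos\alpha}^{\cos\alpha}g\big(e^{i(\beta+\alpha+\pi)}(u+i\sin\alpha)\big)du$, $(\beta,\alpha)\in\mathbb S^1\times[-\pi/2,\pi/2]$. *)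

From Stdlib Require Import Reals.
From Coquelicot Require Import Coquelicot.
Open Scope R_scope.

Definition cis (th : R) : C := (cos th, sin th).

Definition tanhR (t : R) : R := (exp t - exp (- t)) / (exp t + exp (- t)).

Definition Phi (z : C) : C := Cmult (RtoC (2 / (1 + Cmod z ^ 2))) z.

Definition xfun (z : C) : R := (1 - Cmod z ^ 2) / (1 + Cmod z ^ 2).

Definition dfun (z : C) : R := 1 - Cmod z ^ 2.

Definition muH (a : R) : R := / sqrt (1 + a ^ 2).

Definition gammaH (beta a t : R) : C :=
  Cmult (cis beta)
    (Cdiv (Cplus (Cmult (2, a) (RtoC (tanhR (t / 2)))) (0, a))
          (Cplus (Cmult (0, a) (RtoC (tanhR (t / 2)))) (-2, a))).

Definition lineE (beta alpha u : R) : C :=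
  Cmult (cis (beta + alpha + PI)) (u, sin alpha).

(* Hyperbolic X-ray transform: I_0^H h (beta,a) = L means the improper
   integral over R of h(gamma_{beta,a}(t)) converges to L. *)
Definition is_I0H (h : C -> C) (beta a : R) (L : C) : Prop :=
  is_RInt_gen (fun t => h (gammaH beta a t))
    (Rbar_locally m_infty) (Rbar_locally p_infty) L.

(* Euclidean X-ray transform: I_0^E g (beta,alpha) = L means the (possibly
   improper at the endpoints) integral over (-cos alpha, cos alpha) of
   g(e^{i(beta+alpha+pi)}(u + i sin alpha)) converges to L. *)
Definition is_I0E (g : C -> C) (beta alpha : R) (L : C) : Prop :=
  is_RInt_gen (fun u => g (lineE beta alpha u))
    (at_right (- cos alpha)) (at_left (cos alpha)) L.

Definition dx (h : C -> R) (z : C) : R := Derive (fun t => h (Cplus z (t, 0))) 0.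
Definition dy (h : C -> R) (z : C) : R := Derive (fun t => h (Cplus z (0, t))) 0.

Fixpoint Ck (k : nat) (U : C -> Prop) (h : C -> R) : Prop :=
  match k with
  | O => forall z, U z -> continuous h z
  | S k' => (forall z, U z -> continuous h z) /\
            (forall z, U z -> ex_derive (fun t => h (Cplus z (t, 0))) 0 /\
                              ex_derive (fun t => h (Cplus z (0, t))) 0) /\
            Ck k' U (dx h) /\ Ck k' U (dy h)
  end.

Definition smooth_on (U : C -> Prop) (h : C -> R) : Prop := forall k, Ck k U h.

(* f in C^infty(D_E), D_E the closed unit disk: f (complex valued) is the
   restriction of a function that is smooth on an open neighbourhood of D_E. *)
Definition smooth_closed_disk (f : C -> C) : Prop :=
  exists U : C -> Prop, open U /\ (forall z, Cmod z <= 1 -> U z) /\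
    smooth_on U (fun z => fst (f z)) /\ smooth_on U (fun z => snd (f z)).

(* Write E = e^t, K = 1 + a^2 and c = muH a = cos (atan a) = K^(-1/2).  Up to the
   rotation by e^(i beta), Phi maps the geodesic gamma_{beta,a} onto the chord of the
   disk at angle atan a, reached at the parameter u = phi(t) = c (K E^2 - 1) / (K E^2 + 1),
   and x(gamma(t)) = X(t) = 2 E / (K E^2 + 1).  These satisfy c^2 - phi^2 = X^2 = c phi',
   and d = c^2 - u^2 on the chord, so x^(2+2 gam) (f o Phi) along gamma equals
   c phi' (d^gam f) along the chord at phi(t): the identity is the substitution u = phi(t).
   Since 2 + 2 gam > 0, X^(2+2 gam) <= 2^(2+2 gam) e^(-(2+2 gam)|t|) is dominated by the
   derivative of a bounded logistic function, so the Cauchy criterion gives convergence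
   of the hyperbolic integral. *)

From Stdlib Require Import Reals Lra Psatz.
From Coquelicot Require Import Coquelicot.
Open Scope R_scope.

Lemma at_right_open_interval (p q : R) : p < q -> at_right p (fun u => p < u < q).
Proof.
  intros hpq; unfold at_right, within.
  apply (filter_imp (fun u => u < q)); [intros; lra | now apply open_lt].
Qed.

Lemma at_left_open_interval (p q : R) : p < q -> at_left q (fun u => p < u < q).
Proof.
  intros hpq; unfold at_left, within.
  apply (filter_imp (fun u => p < u)); [intros; lra | now apply open_gt].
Qed.

Section ImproperIntegral.

Context {V : CompleteNormedModule R_AbsRing}.

Lemma norm_RInt_le_primitive (h : R -> V) (H dH : R -> R) :
  (forall t, continuous h t) -> (forall t, is_derive H t (dH t)) ->
  (forall t, continuous dH t) -> (forall t, norm (h t) <= dH t) ->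
  forall x y, norm (RInt h x y) <= Rabs (H y - H x).
Proof.
  intros hc hd hdc hb.
  assert (hle : forall x y, x <= y -> norm (RInt h x y) <= Rabs (H y - H x)).
  { intros x y hxy.
    eapply Rle_trans; [| apply Rle_abs].
    apply (norm_RInt_le h dH x y (RInt h x y) (H y - H x) hxy); [intros; apply hb | |].
    - apply RInt_correct, ex_RInt_continuous; intros; apply hc.
    - apply (is_RInt_derive H dH); intros; auto. }
  intros x y; destruct (Rle_or_lt x y) as [hxy | hxy]; [now apply hle |].
  rewrite <- opp_RInt_swap by (apply ex_RInt_continuous; intros; apply hc).
  rewrite (norm_opp (V := V)), Rabs_minus_sym; apply hle; lra.
Qed.

Lemma minus_RInt_Chasles (h : R -> V) (x x' y y' : R) :
  (forall u v, ex_RInt h u v) ->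
  minus (RInt h x' y') (RInt h x y) = plus (RInt h x' x) (RInt h y y').
Proof.
  intros hex.
  rewrite <- (RInt_Chasles h x' x y'), <- (RInt_Chasles h x y y') by auto.
  set (A := RInt h x' x); set (B := RInt h x y); set (D := RInt h y y').
  unfold minus; rewrite (plus_comm B D), plus_assoc, <- (plus_assoc _ B).
  rewrite (plus_opp_r (G := V)), (plus_zero_r (G := V)).
  reflexivity.
Qed.

Lemma ex_RInt_gen_dominated (h : R -> V) (H dH : R -> R) (lm lp : R) :
  (forall t, continuous h t) -> (forall t, is_derive H t (dH t)) ->
  (forall t, continuous dH t) -> (forall t, norm (h t) <= dH t) ->
  is_lim H m_infty lm -> is_lim H p_infty lp ->
  exists L, is_RInt_gen h (Rbar_locally m_infty) (Rbar_locally p_infty) L.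
Proof.
  intros hc hd hdc hb hm hp.
  assert (hex : forall u v, ex_RInt h u v)
    by (intros; apply ex_RInt_continuous; intros; apply hc).
  set (I := fun xy : R * R => RInt h (fst xy) (snd xy)).
  assert (hcauchy : exists L, filterlim I
            (filter_prod (Rbar_locally m_infty) (Rbar_locally p_infty)) (locally L)).
  { apply filterlim_locally_cauchy; intros eps.
    assert (he4 : 0 < eps / 4) by (destruct eps; simpl; lra).
    set (e4 := mkposreal _ he4).
    exists (fun xy : R * R => ball lm e4 (H (fst xy)) /\ ball lp e4 (H (snd xy))).
    split.
    - apply (Filter_prod _ _ _ (fun x => ball lm e4 (H x)) (fun y => ball lp e4 (H y)));
        [apply hm, locally_ball | apply hp, locally_ball | now split].
    - intros [x y] [x' y'] [hx hy] [hx' hy']; simpl in *.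
      apply (@norm_compat1 _ V); unfold I; simpl.
      rewrite minus_RInt_Chasles by auto.
      eapply Rle_lt_trans; [apply (@norm_triangle _ V) |].
      eapply Rle_lt_trans; [apply Rplus_le_compat; apply (norm_RInt_le_primitive h H dH) |]; auto.
      apply Rabs_lt_between' in hx, hy, hx', hy'.
      destruct eps as [e he]; simpl in *.
      assert (Rabs (H x - H x') < e / 2) by (apply Rabs_def1; lra).
      assert (Rabs (H y' - H y) < e / 2) by (apply Rabs_def1; lra).
      lra. }
  destruct hcauchy as [L hL]; exists L.
  intros P HP; specialize (hL P HP).
  unfold filtermapi; eapply filter_imp; [| exact hL].
  intros [x y] hxy; exists (I (x, y)); split; auto.
  now apply RInt_correct.
Qed.

Lemma is_RInt_gen_comp_inverse (g : R -> V) (phi dphi psi : R -> R) (p q : R) (L : V) :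
  (forall u, p < u < q -> continuous g u) ->
  (forall t, is_derive phi t (dphi t)) -> (forall t, continuous dphi t) ->
  (forall t, p < phi t < q) ->
  (forall u, p < u < q -> phi (psi u) = u) ->
  filterlim psi (at_right p) (Rbar_locally m_infty) ->
  filterlim psi (at_left q) (Rbar_locally p_infty) ->
  is_RInt_gen (fun t => scal (dphi t) (g (phi t)))
    (Rbar_locally m_infty) (Rbar_locally p_infty) L ->
  is_RInt_gen g (at_right p) (at_left q) L.
Proof.
  intros hgc hd hdc hrange hinv hleft hright hI.
  assert (hpq : p < q) by (destruct (hrange 0); lra).
  intros P HP; destruct (hI P HP) as [Q1 Q2 HQ1 HQ2 HQ].
  apply (Filter_prod _ _ _ (fun a => p < a < q /\ Q1 (psi a))
                           (fun b => p < b < q /\ Q2 (psi b))).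
  - apply filter_and; [now apply at_right_open_interval | now apply hleft].
  - apply filter_and; [now apply at_left_open_interval | now apply hright].
  - intros a b [ha hQa] [hb hQb].
    destruct (HQ _ _ hQa hQb) as [y [hy hPy]]; exists y; split; [| exact hPy].
    assert (hcomp := is_RInt_comp g phi dphi (psi a) (psi b)
                       (fun t _ => hgc _ (hrange t)) (fun t _ => conj (hd t) (hdc t))).
    rewrite (hinv a ha), (hinv b hb) in hcomp.
    replace y with (RInt g a b)
      by (rewrite <- (is_RInt_unique _ _ _ _ hcomp); exact (is_RInt_unique _ _ _ _ hy)).
    apply RInt_correct, ex_RInt_continuous; intros u hu; apply hgc.
    destruct (Rle_or_lt a b).
    + rewrite Rmin_left, Rmax_right in hu by lra; lra.
    + rewrite Rmin_right, Rmax_left in hu by lra; lra.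
Qed.

End ImproperIntegral.

Definition logistic (k p t : R) : R := k / (1 + exp (- p * t)).

Definition logistic_deriv (k p t : R) : R := k * p * exp (- p * t) / (1 + exp (- p * t)) ^ 2.

Lemma is_derive_logistic (k p t : R) : is_derive (logistic k p) t (logistic_deriv k p t).
Proof.
  unfold logistic, logistic_deriv; assert (hq := exp_pos (- p * t)).
  auto_derive; [lra | field; lra].
Qed.

Lemma continuous_logistic_deriv (k p t : R) : continuous (logistic_deriv k p) t.
Proof.
  apply (@ex_derive_continuous R_AbsRing R_NormedModule); unfold logistic_deriv.
  assert (hq := exp_pos (- p * t)); auto_derive; nra.
Qed.

Lemma is_lim_logistic_p_infty (k p : R) : 0 < p -> is_lim (logistic k p) p_infty k.
Proof.
  intros hp.
  assert (hlin : is_lim (fun t => - p * t) p_infty m_infty).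
  { replace m_infty with (Rbar_mult (- p) p_infty)
      by (simpl; case Rle_dec; [intros; exfalso; lra | reflexivity]).
    apply is_lim_scal_l, is_lim_id. }
  assert (hexp : is_lim (fun t => exp (- p * t)) p_infty 0)
    by (apply (is_lim_comp exp _ _ _ m_infty);
        [apply is_lim_exp_m | exact hlin | now apply filter_forall]).
  replace (Finite k) with (Rbar_mult k (Rbar_inv (Rbar_plus 1 0)))
    by (simpl; f_equal; field).
  apply is_lim_scal_l, is_lim_inv; [| simpl; intros h; injection h; lra].
  apply (is_lim_plus _ _ _ 1 0); [apply is_lim_const | exact hexp | reflexivity].
Qed.

Lemma is_lim_logistic_m_infty (k p : R) : 0 < p -> is_lim (logistic k p) m_infty 0.
Proof.
  intros hp.
  assert (hlin : is_lim (fun t => - p * t) m_infty p_infty).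
  { replace p_infty with (Rbar_mult (- p) m_infty)
      by (simpl; case Rle_dec; [intros; exfalso; lra | reflexivity]).
    apply is_lim_scal_l, is_lim_id. }
  assert (hexp : is_lim (fun t => exp (- p * t)) m_infty p_infty)
    by (apply (is_lim_comp exp _ _ _ p_infty);
        [apply is_lim_exp_p | exact hlin | now apply filter_forall]).
  replace (Finite 0) with (Rbar_mult k (Rbar_inv (Rbar_plus 1 p_infty)))
    by (simpl; f_equal; ring).
  apply is_lim_scal_l, is_lim_inv; [| discriminate].
  apply (is_lim_plus _ _ _ 1 p_infty); [apply is_lim_const | exact hexp | reflexivity].
Qed.

Lemma exp_neg_abs_le (s : R) : exp (- Rabs s) <= 4 * exp s / (1 + exp s) ^ 2.
Proof.
  assert (hE := exp_pos s); assert (hinv : exp s * exp (- s) = 1)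
    by (rewrite <- exp_plus, Rplus_opp_r; apply exp_0).
  apply Rle_div_r; [nra |].
  destruct (Rle_or_lt 0 s) as [hs | hs].
  - rewrite Rabs_right by lra.
    assert (1 <= exp s) by (pose proof (exp_ineq1_le s); lra).
    nra.
  - rewrite Rabs_left, Ropp_involutive by lra.
    assert (exp s < 1) by (rewrite <- exp_0; apply exp_increasing; lra).
    nra.
Qed.

Lemma muH_pos (a : R) : 0 < muH a.
Proof. apply Rinv_0_lt_compat, sqrt_lt_R0; nra. Qed.

Lemma muH_sq (a : R) : muH a ^ 2 = / (1 + a ^ 2).
Proof.
  unfold muH; rewrite pow_inv, <- Rsqr_pow2, Rsqr_sqrt by nra; reflexivity.
Qed.

Lemma cos_atan_muH (a : R) : cos (atan a) = muH a.
Proof. rewrite cos_atan; unfold muH, Rsqr; rewrite Rdiv_1_l; do 3 f_equal; ring. Qed.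

Lemma sin_atan_muH (a : R) : sin (atan a) = a * muH a.
Proof.
  rewrite sin_atan; unfold muH, Rsqr; replace (a * a) with (a ^ 2) by ring; reflexivity.
Qed.

Definition chord_param (a t : R) : R :=
  muH a * ((1 + a ^ 2) * exp t ^ 2 - 1) / ((1 + a ^ 2) * exp t ^ 2 + 1).

Definition chord_param_deriv (a t : R) : R :=
  muH a * (4 * (1 + a ^ 2) * exp t ^ 2) / ((1 + a ^ 2) * exp t ^ 2 + 1) ^ 2.

Definition chord_param_inv (a u : R) : R :=
  ln ((muH a + u) / ((muH a - u) * (1 + a ^ 2))) / 2.

Definition x_geod (a t : R) : R := 2 * exp t / ((1 + a ^ 2) * exp t ^ 2 + 1).

Lemma is_derive_chord_param (a t : R) : is_derive (chord_param a) t (chord_param_deriv a t).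
Proof.
  unfold chord_param, chord_param_deriv; assert (hE := exp_pos t).
  auto_derive; [nra | field; nra].
Qed.

Lemma continuous_chord_param_deriv (a t : R) : continuous (chord_param_deriv a) t.
Proof.
  apply (@ex_derive_continuous R_AbsRing R_NormedModule); unfold chord_param_deriv.
  assert (hE := exp_pos t); auto_derive; nra.
Qed.

Lemma chord_param_bounds (a t : R) : - muH a < chord_param a t < muH a.
Proof.
  unfold chord_param; assert (hc := muH_pos a); assert (hE := exp_pos t).
  assert (hKE : 0 < (1 + a ^ 2) * exp t ^ 2) by (apply Rmult_lt_0_compat; nra).
  split; [apply Rlt_div_r | apply Rlt_div_l]; nra.
Qed.

Lemma chord_param_inv_spec (a u : R) :
  - muH a < u < muH a -> chord_param a (chord_param_inv a u) = u.
Proof.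
  intros hu; unfold chord_param, chord_param_inv.
  set (z := (muH a + u) / ((muH a - u) * (1 + a ^ 2))).
  assert (hz : 0 < z) by (unfold z; apply Rdiv_lt_0_compat; nra).
  assert (hE : exp (ln z / 2) ^ 2 = z).
  { rewrite <- (exp_ln z) at 2 by exact hz.
    replace (ln z) with (ln z / 2 + ln z / 2) at 2 by field; rewrite exp_plus; ring. }
  rewrite hE; unfold z; field; nra.
Qed.

Lemma x_geod_pos (a t : R) : 0 < x_geod a t.
Proof. unfold x_geod; assert (hE := exp_pos t); apply Rdiv_lt_0_compat; nra. Qed.

Lemma muH_sq_minus_chord_param_sq (a t : R) :
  muH a ^ 2 - chord_param a t ^ 2 = x_geod a t ^ 2.
Proof.
  unfold chord_param, x_geod; assert (hE := exp_pos t).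
  transitivity (muH a ^ 2 * (4 * (1 + a ^ 2) * exp t ^ 2) / ((1 + a ^ 2) * exp t ^ 2 + 1) ^ 2);
    [field; nra | rewrite muH_sq; field; nra].
Qed.

Lemma muH_mul_chord_param_deriv (a t : R) :
  muH a * chord_param_deriv a t = x_geod a t ^ 2.
Proof.
  unfold chord_param_deriv, x_geod; assert (hE := exp_pos t).
  transitivity (muH a ^ 2 * (4 * (1 + a ^ 2) * exp t ^ 2) / ((1 + a ^ 2) * exp t ^ 2 + 1) ^ 2);
    [field; nra | rewrite muH_sq; field; nra].
Qed.

Lemma x_geod_le_exp_neg_abs (a t : R) : x_geod a t <= 2 * exp (- Rabs t).
Proof.
  unfold x_geod; assert (hE := exp_pos t); assert (hE' := exp_pos (- t)).
  assert (hinv : exp t * exp (- t) = 1) by (rewrite <- exp_plus, Rplus_opp_r; apply exp_0).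
  apply Rle_div_l; [nra |].
  destruct (Rle_or_lt 0 t).
  - rewrite Rabs_right by lra.
    assert (exp (- t) * ((1 + a ^ 2) * exp t ^ 2) = (1 + a ^ 2) * exp t)
      by (transitivity ((1 + a ^ 2) * exp t * (exp t * exp (- t))); [ring | rewrite hinv; ring]).
    nra.
  - rewrite Rabs_left, Ropp_involutive by lra.
    assert (0 <= (1 + a ^ 2) * exp t ^ 2) by nra.
    nra.
Qed.

Lemma chord_param_inv_lt (a u M : R) : - muH a < u < muH a ->
  muH a + u < exp (2 * M) * ((muH a - u) * (1 + a ^ 2)) -> chord_param_inv a u < M.
Proof.
  intros hu hlt; unfold chord_param_inv.
  assert (hratio : (muH a + u) / ((muH a - u) * (1 + a ^ 2)) < exp (2 * M))
    by (apply Rlt_div_l; nra).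
  apply ln_increasing in hratio; [rewrite ln_exp in hratio; lra | apply Rdiv_lt_0_compat; nra].
Qed.

Lemma chord_param_inv_gt (a u M : R) : - muH a < u < muH a ->
  exp (2 * M) * ((muH a - u) * (1 + a ^ 2)) < muH a + u -> M < chord_param_inv a u.
Proof.
  intros hu hlt; unfold chord_param_inv.
  assert (hratio : exp (2 * M) < (muH a + u) / ((muH a - u) * (1 + a ^ 2)))
    by (apply Rlt_div_r; nra).
  apply ln_increasing in hratio; [rewrite ln_exp in hratio; lra | apply exp_pos].
Qed.

Lemma chord_param_inv_at_left_end (a : R) :
  filterlim (chord_param_inv a) (at_right (- muH a)) (Rbar_locally m_infty).
Proof.
  intros Q [M hM]; assert (hc := muH_pos a); assert (hE := exp_pos (2 * M)).
  assert (hd : 0 < Rmin (muH a) (muH a * exp (2 * M))) by (apply Rmin_glb_lt; nra).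
  exists (mkposreal _ hd); intros u hu hu'; simpl in hu.
  apply Rabs_lt_between' in hu.
  assert (h1 := Rmin_l (muH a) (muH a * exp (2 * M))).
  assert (h2 := Rmin_r (muH a) (muH a * exp (2 * M))).
  apply hM, chord_param_inv_lt; [lra |].
  assert (muH a <= (muH a - u) * (1 + a ^ 2)) by nra.
  nra.
Qed.

Lemma chord_param_inv_at_right_end (a : R) :
  filterlim (chord_param_inv a) (at_left (muH a)) (Rbar_locally p_infty).
Proof.
  intros Q [M hM]; assert (hc := muH_pos a); assert (hE := exp_pos (2 * M)).
  set (K := exp (2 * M) * (1 + a ^ 2)); assert (hK : 0 < K) by (unfold K; nra).
  assert (hd : 0 < Rmin (muH a) (muH a / K))
    by (apply Rmin_glb_lt; [| apply Rdiv_lt_0_compat]; lra).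
  exists (mkposreal _ hd); intros u hu hu'; simpl in hu.
  apply Rabs_lt_between' in hu.
  assert (h1 := Rmin_l (muH a) (muH a / K)).
  assert (h2 := Rmin_r (muH a) (muH a / K)).
  apply hM, chord_param_inv_gt; [lra |].
  assert ((muH a - u) * K < muH a) by (apply Rlt_div_r; lra).
  unfold K in *; nra.
Qed.

Lemma Cmod_sq (z : C) : Cmod z ^ 2 = fst z ^ 2 + snd z ^ 2.
Proof. unfold Cmod; rewrite pow2_sqrt; [reflexivity | nra]. Qed.

Lemma Cmod_cis (th : R) : Cmod (cis th) = 1.
Proof.
  unfold Cmod, cis; simpl.
  rewrite !Rmult_1_r, <- !Rsqr_def, Rplus_comm, sin2_cos2; apply sqrt_1.
Qed.

Lemma cis_plus (x y : R) : cis (x + y) = Cmult (cis x) (cis y).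
Proof. unfold cis, Cmult; simpl; rewrite cos_plus, sin_plus; f_equal; ring. Qed.

Lemma Phi_rotate (r z : C) : Cmod r = 1 -> Phi (Cmult r z) = Cmult r (Phi z).
Proof. intros hr; unfold Phi; rewrite Cmod_mult, hr, Rmult_1_l; ring. Qed.

Lemma xfun_rotate (r z : C) : Cmod r = 1 -> xfun (Cmult r z) = xfun z.
Proof. intros hr; unfold xfun; rewrite Cmod_mult, hr, Rmult_1_l; reflexivity. Qed.

Lemma dfun_rotate (r z : C) : Cmod r = 1 -> dfun (Cmult r z) = dfun z.
Proof. intros hr; unfold dfun; rewrite Cmod_mult, hr, Rmult_1_l; reflexivity. Qed.

Lemma gammaH_rotate (beta a t : R) : gammaH beta a t = Cmult (cis beta) (gammaH 0 a t).
Proof. unfold gammaH at 2, cis at 2; rewrite cos_0, sin_0, Cmult_1_l; reflexivity. Qed.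

Lemma lineE_rotate (beta alpha u : R) : lineE beta alpha u = Cmult (cis beta) (lineE 0 alpha u).
Proof.
  unfold lineE; rewrite Rplus_0_l, Cmult_assoc, <- cis_plus, Rplus_assoc; reflexivity.
Qed.

Lemma tanhR_half (t : R) : tanhR (t / 2) = (exp t - 1) / (exp t + 1).
Proof.
  unfold tanhR; set (w := exp (t / 2)); assert (hw : 0 < w) by apply exp_pos.
  assert (hsq : exp t = w * w) by (unfold w; rewrite <- exp_plus; f_equal; field).
  rewrite exp_Ropp; fold w; rewrite hsq; field; nra.
Qed.

Lemma gammaH0_explicit (a t : R) :
  gammaH 0 a t =
  ((1 + (a ^ 2 - 1) * exp t ^ 2) / ((1 + a ^ 2) * exp t ^ 2 + 2 * exp t + 1),
   - 2 * a * exp t ^ 2 / ((1 + a ^ 2) * exp t ^ 2 + 2 * exp t + 1)).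
Proof.
  unfold gammaH, cis; rewrite cos_0, sin_0, Cmult_1_l, tanhR_half.
  assert (hE := exp_pos t).
  unfold Cdiv, Cmult, Cplus, Cinv, RtoC; simpl; f_equal; field; nra.
Qed.

Lemma Phi_gammaH0 (a t : R) :
  Phi (gammaH 0 a t) =
  ((1 + (a ^ 2 - 1) * exp t ^ 2) / ((1 + a ^ 2) * exp t ^ 2 + 1),
   - 2 * a * exp t ^ 2 / ((1 + a ^ 2) * exp t ^ 2 + 1)).
Proof.
  unfold Phi; rewrite Cmod_sq, gammaH0_explicit; simpl.
  assert (hE := exp_pos t).
  unfold Cmult, RtoC; simpl; f_equal; field; nra.
Qed.

Lemma xfun_gammaH0 (a t : R) : xfun (gammaH 0 a t) = x_geod a t.
Proof.
  unfold xfun, x_geod; rewrite Cmod_sq, gammaH0_explicit; simpl.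
  assert (hE := exp_pos t); field; nra.
Qed.

Lemma lineE0_atan (a u : R) :
  lineE 0 (atan a) u = (muH a * (a ^ 2 * muH a - u), - (a * muH a * (muH a + u))).
Proof.
  unfold lineE, cis, Cmult; simpl.
  rewrite Rplus_0_l, neg_cos, neg_sin, cos_atan_muH, sin_atan_muH; f_equal; ring.
Qed.

Lemma lineE0_chord_param (a t : R) :
  lineE 0 (atan a) (chord_param a t) =
  ((1 + (a ^ 2 - 1) * exp t ^ 2) / ((1 + a ^ 2) * exp t ^ 2 + 1),
   - 2 * a * exp t ^ 2 / ((1 + a ^ 2) * exp t ^ 2 + 1)).
Proof.
  rewrite lineE0_atan; unfold chord_param; assert (hE := exp_pos t).
  f_equal.
  - transitivity
      (muH a ^ 2 * (a ^ 2 - ((1 + a ^ 2) * exp t ^ 2 - 1) / ((1 + a ^ 2) * exp t ^ 2 + 1)));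
      [field; nra | rewrite muH_sq; field; nra].
  - transitivity
      (- a * muH a ^ 2 * (1 + ((1 + a ^ 2) * exp t ^ 2 - 1) / ((1 + a ^ 2) * exp t ^ 2 + 1)));
      [field; nra | rewrite muH_sq; field; nra].
Qed.

Lemma dfun_lineE0 (a u : R) : dfun (lineE 0 (atan a) u) = muH a ^ 2 - u ^ 2.
Proof.
  unfold dfun; rewrite Cmod_sq, lineE0_atan; cbn [fst snd].
  transitivity (1 - muH a ^ 2 * (1 + a ^ 2) * (a ^ 2 * muH a ^ 2 + u ^ 2)); [ring |].
  rewrite !muH_sq; field; nra.
Qed.

Lemma Phi_gammaH (beta a t : R) :
  Phi (gammaH beta a t) = lineE beta (atan a) (chord_param a t).
Proof.
  rewrite gammaH_rotate, lineE_rotate, Phi_rotate by apply Cmod_cis.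
  rewrite Phi_gammaH0, lineE0_chord_param; reflexivity.
Qed.

Lemma xfun_gammaH (beta a t : R) : xfun (gammaH beta a t) = x_geod a t.
Proof. rewrite gammaH_rotate, xfun_rotate by apply Cmod_cis; apply xfun_gammaH0. Qed.

Lemma dfun_lineE (beta a u : R) : dfun (lineE beta (atan a) u) = muH a ^ 2 - u ^ 2.
Proof. rewrite lineE_rotate, dfun_rotate by apply Cmod_cis; apply dfun_lineE0. Qed.

Lemma continuous_C_pair {T : UniformSpace} (u v : T -> R) (x : T) :
  continuous u x -> continuous v x -> @continuous T C_UniformSpace (fun y => (u y, v y)) x.
Proof.
  intros hu hv; apply (continuous_comp_2 u v pair); auto.
  eapply filterlim_ext; [| apply filterlim_id]; intros [p q]; reflexivity.
Qed.

Lemma continuous_smooth_closed_disk (f : C -> C) (z : C) :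
  smooth_closed_disk f -> Cmod z <= 1 -> continuous f z.
Proof.
  intros [U [_ [hU [hre him]]]] hz.
  eapply filterlim_ext; [| apply (continuous_C_pair (fun w => fst (f w)) (fun w => snd (f w)))].
  - intros w; simpl; destruct (f w); reflexivity.
  - exact (hre 0%nat z (hU z hz)).
  - exact (him 0%nat z (hU z hz)).
Qed.

Lemma continuous_lineE (beta alpha u : R) : continuous (lineE beta alpha) u.
Proof.
  unfold lineE, cis, Cmult; simpl.
  apply continuous_C_pair;
    apply (@ex_derive_continuous R_AbsRing R_NormedModule); auto_derive; auto.
Qed.

Lemma Cmod_lineE_le_1 (beta a u : R) :
  - muH a <= u <= muH a -> Cmod (lineE beta (atan a) u) <= 1.
Proof.
  intros hu; assert (hd := dfun_lineE beta a u); unfold dfun in hd.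
  assert (hc := muH_pos a); assert (h0 := Cmod_ge_0 (lineE beta (atan a) u)).
  nra.
Qed.

Lemma continuous_Rpower_l (y x : R) : 0 < x -> continuous (fun z => Rpower z y) x.
Proof.
  intros hx; apply (@ex_derive_continuous R_AbsRing R_NormedModule).
  unfold Rpower; auto_derive; exact hx.
Qed.

Lemma Rpower_x_geod_le (a p t : R) :
  0 < p -> Rpower (x_geod a t) p <= logistic_deriv (4 * Rpower 2 p / p) p t.
Proof.
  intros hp; assert (hX := x_geod_pos a t).
  apply Rle_trans with (Rpower 2 p * exp (- Rabs (- p * t))).
  - rewrite Rabs_mult, Rabs_Ropp, (Rabs_right p) by lra.
    apply Rle_trans with (Rpower (2 * exp (- Rabs t)) p);
      [apply Rle_Rpower_l; [lra | split; [exact hX | apply x_geod_le_exp_neg_abs]] |].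
    rewrite <- Rpower_mult_distr by (try apply exp_pos; lra).
    unfold Rpower at 2; rewrite ln_exp; right; f_equal; f_equal; ring.
  - unfold logistic_deriv; assert (hpow := exp_pos (p * ln 2)).
    apply Rle_trans with (Rpower 2 p * (4 * exp (- p * t) / (1 + exp (- p * t)) ^ 2));
      [apply Rmult_le_compat_l; [unfold Rpower; lra | apply exp_neg_abs_le] |].
    right; field; split; [lra | assert (hq := exp_pos (- p * t)); lra].
Qed.

Lemma Rpower_two_add_two_mul (x g : R) :
  0 < x -> Rpower x (2 + 2 * g) = x ^ 2 * Rpower (x ^ 2) g.
Proof.
  intros hx; assert (h2 : Rpower x 2 = x ^ 2)
    by (rewrite <- Rpower_pow by exact hx; f_equal; simpl; ring).
  rewrite Rpower_plus, <- Rpower_mult, h2; reflexivity.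
Qed.

Lemma Rpower_x_geod_factor (a gam t : R) :
  Rpower (x_geod a t) (2 + 2 * gam)
  = muH a * chord_param_deriv a t * Rpower (muH a ^ 2 - chord_param a t ^ 2) gam.
Proof.
  rewrite muH_sq_minus_chord_param_sq, muH_mul_chord_param_deriv.
  apply Rpower_two_add_two_mul, x_geod_pos.
Qed.

Section ChordIntegrals.

Context {V : CompleteNormedModule R_AbsRing}.

Lemma ex_RInt_gen_x_geod_pow (a p : R) (F : R -> V) :
  0 < p -> (forall u, - muH a <= u <= muH a -> continuous F u) ->
  exists L, is_RInt_gen (fun t => scal (Rpower (x_geod a t) p) (F (chord_param a t)))
              (Rbar_locally m_infty) (Rbar_locally p_infty) L.
Proof.
  intros hp hF.
  destruct (bounded_continuity F (- muH a) (muH a) hF) as [M hM].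
  assert (hrange := chord_param_bounds a).
  assert (hM0 : 0 <= M) by (apply Rle_trans with (norm (F 0));
    [apply norm_ge_0 | left; apply hM; assert (hc := muH_pos a); lra]).
  set (k := M * (4 * Rpower 2 p / p)).
  apply (ex_RInt_gen_dominated _ (logistic k p) (logistic_deriv k p) 0 k);
    [| apply is_derive_logistic | apply continuous_logistic_deriv | |
     apply is_lim_logistic_m_infty | apply is_lim_logistic_p_infty]; auto.
  - intros t; apply (@continuous_scal R_UniformSpace R_AbsRing V).
    + apply (continuous_comp (x_geod a) (fun z => Rpower z p));
        [| apply continuous_Rpower_l, x_geod_pos].
      apply (@ex_derive_continuous R_AbsRing R_NormedModule); unfold x_geod.
      assert (hE := exp_pos t); auto_derive; nra.
    + apply (continuous_comp (chord_param a) F); [| apply hF; destruct (hrange t); lra].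
      apply (@ex_derive_continuous R_AbsRing R_NormedModule).
      eexists; apply is_derive_chord_param.
  - intros t; eapply Rle_trans; [apply (@norm_scal R_AbsRing V) |].
    unfold abs; simpl; rewrite Rabs_right by (left; apply exp_pos).
    apply Rle_trans with (logistic_deriv (4 * Rpower 2 p / p) p t * M).
    + apply Rmult_le_compat; [left; apply exp_pos | apply norm_ge_0 | now apply Rpower_x_geod_le |].
      left; apply hM; destruct (hrange t); lra.
    + right; unfold logistic_deriv, k; field.
      split; [lra | assert (hq := exp_pos (- p * t)); lra].
Qed.

Lemma is_RInt_gen_chord_subst (a gam : R) (F : R -> V) (L : V) :
  (forall u, - muH a <= u <= muH a -> continuous F u) ->
  is_RInt_gen (fun t => scal (Rpower (x_geod a t) (2 + 2 * gam)) (F (chord_param a t)))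
    (Rbar_locally m_infty) (Rbar_locally p_infty) L ->
  is_RInt_gen (fun u => scal (Rpower (muH a ^ 2 - u ^ 2) gam) (F u))
    (at_right (- muH a)) (at_left (muH a)) (scal (/ muH a) L).
Proof.
  intros hF hL; assert (hc := muH_pos a).
  apply (is_RInt_gen_comp_inverse (fun u => scal (Rpower (muH a ^ 2 - u ^ 2) gam) (F u))
           (chord_param a) (chord_param_deriv a) (chord_param_inv a));
    [| apply is_derive_chord_param | apply continuous_chord_param_deriv | apply chord_param_bounds
     | apply chord_param_inv_spec | apply chord_param_inv_at_left_end
     | apply chord_param_inv_at_right_end |].
  - intros u hu; apply (@continuous_scal R_UniformSpace R_AbsRing V); [| apply hF; lra].
    apply (continuous_comp (fun u => muH a ^ 2 - u ^ 2) (fun z => Rpower z gam));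
      [apply (@ex_derive_continuous R_AbsRing R_NormedModule); auto_derive; auto |].
    apply continuous_Rpower_l.
    replace (muH a ^ 2 - u ^ 2) with ((muH a - u) * (muH a + u)) by ring.
    apply Rmult_lt_0_compat; lra.
  - apply (is_RInt_gen_ext (fun t => scal (/ muH a)
             (scal (Rpower (x_geod a t) (2 + 2 * gam)) (F (chord_param a t))))).
    + apply filter_forall; intros _ t _.
      rewrite (Rpower_x_geod_factor a gam t), !scal_assoc.
      (* generalizing first keeps [simpl] from unfolding the transcendental terms *)
      f_equal; generalize (Rpower (muH a ^ 2 - chord_param a t ^ 2) gam) (chord_param_deriv a t).
      intros r d; unfold mult; simpl; field; lra.
    + exact (is_RInt_gen_scal _ (/ muH a) _ hL).
Qed.

End ChordIntegrals.

Lemma continuous_f_lineE (f : C -> C) (beta a u : R) :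
  smooth_closed_disk f -> - muH a <= u <= muH a ->
  continuous (fun v => f (lineE beta (atan a) v)) u.
Proof.
  intros hf hu; apply (continuous_comp (lineE beta (atan a)) f); [apply continuous_lineE |].
  apply continuous_smooth_closed_disk; [exact hf | now apply Cmod_lineE_le_1].
Qed.

Theorem theorem3p13 (gam : R) (hgam : -1 < gam) (f : C -> C)
  (hf : smooth_closed_disk f) (beta a : R) :
  exists L : C,
    is_I0E (fun z => Cmult (RtoC (Rpower (dfun z) gam)) (f z)) beta (atan a) L /\
    is_I0H (fun z => Cmult (RtoC (Rpower (xfun z) (2 + 2 * gam))) (f (Phi z)))
      beta a (Cmult (RtoC (muH a)) L).
Proof.
  set (F := fun u => f (lineE beta (atan a) u)).
  assert (hF : forall u, - muH a <= u <= muH a -> continuous F u)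
    by (intros u hu; now apply continuous_f_lineE).
  destruct (ex_RInt_gen_x_geod_pow (V := C_R_CompleteNormedModule) a (2 + 2 * gam) F
              ltac:(lra) hF) as [LH hLH].
  exists (scal (/ muH a) LH); split.
  - unfold is_I0E; rewrite cos_atan_muH.
    apply (is_RInt_gen_ext (fun u => scal (Rpower (muH a ^ 2 - u ^ 2) gam) (F u)));
      [| exact (is_RInt_gen_chord_subst (V := C_R_CompleteNormedModule) a gam F LH hF hLH)].
    apply filter_forall; intros _ u _.
    rewrite scal_R_Cmult, (dfun_lineE beta a u); reflexivity.
  - unfold is_I0H.
    rewrite scal_R_Cmult, Cmult_assoc, <- RtoC_mult, Rinv_r, Cmult_1_l
      by apply Rgt_not_eq, muH_pos.
    apply (is_RInt_gen_ext
             (fun t => scal (Rpower (x_geod a t) (2 + 2 * gam)) (F (chord_param a t))));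
      [| exact hLH].
    apply filter_forall; intros _ t _.
    rewrite scal_R_Cmult, (xfun_gammaH beta a t), (Phi_gammaH beta a t); reflexivity.
Qed.
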